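(* Let $\alpha\in\mathbb{R}\setminus\{0\}$, let $\delta^{\star}(\alpha)=1/\alpha^2$ if $\alpha\le 2$ and $\delta^{\star}(\alpha)=\frac{1}{2\alpha}\exp\{1-\frac{\alpha}{2}\}$ if $\alpha>2$, let $|\delta|\le\delta^{\star}(\alpha)$, and let $C(u,v)=uv+\delta(1-e^{\alpha(u-u^2)})(1-e^{\alpha(v-v^2)})$ on $[0,1]^2$. Then $C$ has no tail dependence: $$\lambda_L=\lim_{u\to0^+}\frac{C(u,u)}{u}=0,\qquad \lambda_U=\lim_{u\to1^-}\frac{1-2u+C(u,u)}{1-u}=0.$$ *)

From mathcomp Require Import all_boot all_order all_algebra.
From mathcomp Require Import all_classical all_reals all_analysis.
Set Implicit Arguments. Unset Strict Implicit. Unset Printing Implicit Defensive.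
Import Order.TTheory GRing.Theory Num.Theory.
Local Open Scope ring_scope.

Definition delta_star {R : realType} (alpha : R) : R :=
  if alpha <= 2 then 1 / alpha ^+ 2
  else (1 / (2 * alpha)) * expR (1 - alpha / 2).

Definition copC {R : realType} (alpha delta : R) (u v : R) : R :=
  u * v + delta * (1 - expR (alpha * (u - u ^+ 2)))
                * (1 - expR (alpha * (v - v ^+ 2))).

From mathcomp Require Import all_boot all_order all_algebra.
From mathcomp Require Import all_classical all_reals all_analysis.
From mathcomp Require Import ring lra.
Import Order.TTheory GRing.Theory Num.Theory numFieldNormedType.Exports.
Local Open Scope classical_set_scope.
Local Open Scope ring_scope.

(* On the diagonal, C(u,u) = u^2 + delta g(u)^2 with g(u) = 1 - exp(alpha (u - u^2))
   and |g(u)| <= |alpha| u e^|alpha|, so C(u,u)/u = O(u) as u -> 0+.  Since u - u^2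
   is invariant under u |-> 1 - u, we have 1 - 2u + C(u,u) = C(1-u,1-u), and the
   upper tail is the lower tail read at 1 - u. *)

Lemma squeeze_norm_cvgr0 {R : realFieldType} {T : Type} {F : set_system T}
    {FF : Filter F} (f g : T -> R) :
  (\forall t \near F, `|f t| <= g t) -> g @ F --> 0 -> f @ F --> 0.
Proof.
move=> fg g0; apply: (squeeze_cvgr (f := -%R \o g) (h := g)) => //.
- by apply: filterS fg => t; rewrite ler_norml.
- by rewrite -oppr0; exact: cvgN.
Qed.

Lemma normr_1subexpR_le {R : realType} (x : R) : `|1 - expR x| <= `|x| * expR `|x|.
Proof.
have [x_ge0 | x_lt0] := leP 0 x.
- rewrite (ger0_norm x_ge0) ler0_norm; last by rewrite subr_le0 -expR0 ler_expR.
  have : expR x * (1 - x) <= 1.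
    by rewrite -ler_pdivlMl ?expR_gt0 // mulr1 -expRN expR_ge1Dx.
  nra.
- rewrite (ltr0_norm x_lt0) ger0_norm; last by rewrite subr_ge0 expR_le1 ltW.
  have := expR_ge1Dx x.
  have : 1 <= expR (- x) by rewrite -expR0 ler_expR oppr_ge0 ltW.
  nra.
Qed.

Section CopulaDiagonal.
Variables (R : realType) (a d : R).

Lemma copC_diag (u : R) :
  copC a d u u = u ^+ 2 + d * (1 - expR (a * (u - u ^+ 2))) ^+ 2.
Proof. by rewrite /copC; ring. Qed.

Lemma copC_diag_1subr (u : R) :
  1 - 2 * u + copC a d u u = copC a d (1 - u) (1 - u).
Proof.
by rewrite !copC_diag (_ : (1 - u) - (1 - u) ^+ 2 = u - u ^+ 2); ring.
Qed.

Lemma normr_copC_diag_div_le (v : R) : 0 < v <= 1 ->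
  `|copC a d v v / v| <= (1 + `|d| * a ^+ 2 * expR `|a| ^+ 2) * v.
Proof.
case/andP=> v_gt0 v_le1.
set g := 1 - expR (a * (v - v ^+ 2)).
have g_le : `|g| <= `|a| * v * expR `|a|.
  have x_le : `|a * (v - v ^+ 2)| <= `|a| * v.
    by rewrite normrM ler_wpM2l // ger0_norm; nra.
  apply: le_trans (normr_1subexpR_le _) _.
  apply: ler_pM => //; rewrite ler_expR.
  by apply: le_trans x_le _; rewrite ler_piMr.
have -> : copC a d v v / v = v + d * (g ^+ 2 / v).
  by rewrite copC_diag -/g; field; rewrite gt_eqF.
have g2_le : `|g| ^+ 2 <= a ^+ 2 * (expR `|a| ^+ 2 * v) * v.
  rewrite -(real_normK (num_real a)) (_ : _ * _ = (`|a| * v * expR `|a|) ^+ 2).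
    by rewrite ler_sqr ?nnegrE // (le_trans _ g_le).
  by ring.
apply: le_trans (ler_normD _ _) _.
rewrite 2!normrM normrX normfV (gtr0_norm v_gt0) mulrDl mul1r lerD2l -2!mulrA.
by rewrite ler_wpM2l // ler_pdivrMr.
Qed.

Lemma copC_lower_tail0 :
  (fun u => copC a d u u / u) @ 0^'+ --> 0.
Proof.
set K := 1 + `|d| * a ^+ 2 * expR `|a| ^+ 2.
apply: (squeeze_norm_cvgr0 _ (fun u => K * u)).
- near=> u; apply: normr_copC_diag_div_le; apply/andP; split.
  + by near: u; exact: nbhs_right_gt.
  + by apply: ltW; near: u; exact: nbhs_right_lt.
- apply: cvg_at_right_filter; rewrite -[X in _ --> X](mulr0 K).
  by apply: cvgM; [exact: cvg_cst | exact: cvg_id].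
Unshelve. all: by end_near.
Qed.

Lemma copC_upper_tail0 :
  (fun u => (1 - 2 * u + copC a d u u) / (1 - u)) @ 1^'- --> 0.
Proof.
set K := 1 + `|d| * a ^+ 2 * expR `|a| ^+ 2.
apply: (squeeze_norm_cvgr0 _ (fun u => K * (1 - u))).
- near=> u; rewrite copC_diag_1subr; apply: normr_copC_diag_div_le.
  have u_gt0 : 0 < u by near: u; exact: nbhs_left_gt.
  have u_lt1 : u < 1 by near: u; exact: nbhs_left_lt.
  by apply/andP; split; lra.
- apply: cvg_at_left_filter.
  rewrite [X in _ --> X](_ : 0 = K * (1 - 1)); last by rewrite subrr mulr0.
  by apply: cvgM; [exact: cvg_cst | apply: cvgB; [exact: cvg_cst | exact: cvg_id]].
Unshelve. all: by end_near.
Qed.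

End CopulaDiagonal.

Theorem proposition4 (R : realType) (alpha delta : R)
  (halpha : alpha != 0) (hdelta : `|delta| <= delta_star alpha) :
  ((fun u : R => copC alpha delta u u / u) @ 0^'+ --> 0) /\
  ((fun u : R => (1 - 2 * u + copC alpha delta u u) / (1 - u)) @ 1^'- --> 0).
Proof. by split; [exact: copC_lower_tail0 | exact: copC_upper_tail0]. Qed.
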